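(* For every $n$, $F_{\wedge,\to}(n)\cong\mathcal U(U(n)_{\wedge,\to})$ as implicative meet-semilattices.
   Context: $F_{\wedge,\to}(n)$ is the free implicative meet-semilattice on $p_1,\dots,p_n$ (the $(\wedge,\to)$-formulas in $p_1,\dots,p_n$ modulo IPC-equivalence). $\mathcal U(X)$ is the Heyting algebra of up-sets of a poset $X$. Models are posets with order-preserving colouring $c:M\to\{0,1\}^n$ and intuitionistic Kripke semantics ($x\models p_i$ iff $c(x)_i=1$). A point $x$ is separated if for some variable $q$, $x\not\models q$ but all $y>x$ satisfy $q$; $M^s$ is the set of separated points with restricted order and colouring. $U(n)$ is the $n$-universal model: the generated submodel of the canonical model of IPC on $p_1,\dots,p_n$ (prime filters of the free Heyting algebra ordered by inclusion, $c(x)_i=1$ iff $p_i\in x$) consisting of points with finite up-set. For every model of finite depth there is a unique p-morphism into $U(n)$; $U(n)_{\wedge,\to}$ is the image of the unique p-morphism $U(n)^s\to U(n)$. *)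

From mathcomp Require Import all_boot.
From Stdlib Require Import List.
Set Implicit Arguments.
Unset Strict Implicit.
Unset Printing Implicit Defensive.

Inductive form (n : nat) : Type :=
| Var : 'I_n -> form n
| Bot : form n
| And : form n -> form n -> form n
| Or  : form n -> form n -> form n
| Imp : form n -> form n -> form n.
Arguments Var {n}. Arguments Bot {n}. Arguments And {n}. Arguments Or {n}. Arguments Imp {n}.

Definition Top {n} : form n := Imp Bot Bot.

Inductive nd {n : nat} : list (form n) -> form n -> Prop :=
| ndAx   G a     : List.In a G -> nd G a
| ndAndI G a b   : nd G a -> nd G b -> nd G (And a b)
| ndAndE1 G a b  : nd G (And a b) -> nd G a
| ndAndE2 G a b  : nd G (And a b) -> nd G b
| ndOrI1 G a b   : nd G a -> nd G (Or a b)
| ndOrI2 G a b   : nd G b -> nd G (Or a b)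
| ndOrE  G a b c : nd G (Or a b) -> nd (a :: G) c -> nd (b :: G) c -> nd G c
| ndImpI G a b   : nd (a :: G) b -> nd G (Imp a b)
| ndImpE G a b   : nd G (Imp a b) -> nd G a -> nd G b
| ndBotE G a     : nd G Bot -> nd G a.

Definition prov {n} (a : form n) : Prop := nd nil a.

Inductive iform (n : nat) : Type :=
| IVar : 'I_n -> iform n
| ITop : iform n
| IAnd : iform n -> iform n -> iform n
| IImp : iform n -> iform n -> iform n.
Arguments IVar {n}. Arguments ITop {n}. Arguments IAnd {n}. Arguments IImp {n}.

Fixpoint emb {n} (a : iform n) : form n :=
  match a with
  | IVar i => Var i
  | ITop => Top
  | IAnd a b => And (emb a) (emb b)
  | IImp a b => Imp (emb a) (emb b)
  end.

(* IPC-equivalence of (and,->)-formulas; F_{and,->}(n) = iform n / ipc_equiv. *)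
Definition ipc_equiv {n} (a b : iform n) : Prop :=
  prov (Imp (emb a) (emb b)) /\ prov (Imp (emb b) (emb a)).

(* ---------- Canonical model: prime filters of the free Heyting algebra ----------
   A filter of the Lindenbaum algebra form n / IPC-equivalence is represented by
   the set of formulas whose classes lie in it. *)
Definition prime_filter {n} (x : form n -> Prop) : Prop :=
  [/\ x Top,
      (forall a b, x a -> prov (Imp a b) -> x b),
      (forall a b, x a -> x b -> x (And a b)),
      ~ x Bot
    & (forall a b, x (Or a b) -> x a \/ x b)].

Definition incl {n} (x y : form n -> Prop) : Prop := forall a, x a -> y a.
Definition same {n} (x y : form n -> Prop) : Prop := forall a, x a <-> y a.

Definition finite_upset {n} (x : form n -> Prop) : Prop :=
  exists l : list (form n -> Prop),
    forall y, prime_filter y -> incl x y -> exists z, List.In z l /\ same y z.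

Definition upoint (n : nat) : Type :=
  { x : form n -> Prop | prime_filter x /\ finite_upset x }.

Definition ule {n} (x y : upoint n) : Prop := incl (proj1_sig x) (proj1_sig y).
Definition ult {n} (x y : upoint n) : Prop := ule x y /\ ~ ule y x.
Definition ueq {n} (x y : upoint n) : Prop := same (proj1_sig x) (proj1_sig y).
Definition ucol {n} (x : upoint n) (i : 'I_n) : Prop := proj1_sig x (Var i).

Definition separated {n} (x : upoint n) : Prop :=
  exists i : 'I_n, ~ ucol x i /\ forall y : upoint n, ult x y -> ucol y i.

Definition spoint (n : nat) : Type := { x : upoint n | separated x }.

Definition pmorphism {n} (f : spoint n -> upoint n) : Prop :=
  [/\ (forall x y : spoint n, ule (proj1_sig x) (proj1_sig y) -> ule (f x) (f y)),
      (forall (x : spoint n) (i : 'I_n), ucol (f x) i <-> ucol (proj1_sig x) i)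
    & (forall (x : spoint n) (y : upoint n), ule (f x) y ->
         exists x' : spoint n, ule (proj1_sig x) (proj1_sig x') /\ ueq (f x') y)].

(* U(n)_{and,->}: the image of the (unique) p-morphism U(n)^s -> U(n),
   as a subposet of U(n). *)
Definition Uai {n} (y : upoint n) : Prop :=
  exists f : spoint n -> upoint n, pmorphism f /\ exists x : spoint n, ueq (f x) y.

Definition upset_Uai {n} (A : upoint n -> Prop) : Prop :=
  (forall x, A x -> Uai x) /\
  (forall x y, A x -> Uai y -> ule x y -> A y).

Definition up_imp {n} (A B : upoint n -> Prop) (x : upoint n) : Prop :=
  Uai x /\ forall y, Uai y -> ule x y -> A y -> B y.

Definition impl_semilattice_iso {n} (g : iform n -> (upoint n -> Prop)) : Prop :=
  [/\ (forall a, upset_Uai (g a)),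
      (forall a b x, g (IAnd a b) x <-> (g a x /\ g b x)),
      (forall a b x, g (IImp a b) x <-> up_imp (g a) (g b) x),
      (forall a b, (forall x, g a x <-> g b x) <-> ipc_equiv a b)
    & (forall A, upset_Uai A -> exists a, forall x, g a x <-> A x)].

From Pilot Require Import Defs.
From mathcomp Require Import all_boot.
From Stdlib Require Import List Classical ClassicalEpsilon.
Set Implicit Arguments.
Unset Strict Implicit.

(* The isomorphism sends an (\wedge,\to)-formula to the set of points of
   U(n)_{\wedge,\to} containing it. Meets are preserved trivially; implications are
   preserved because every point of U(n)_{\wedge,\to} is the image of a separated
   point, and a separated point [u] whose (\wedge,\to)-theory is contained in that of
   a separated [t] has a separated successor with exactly the (\wedge,\to)-theory of
   [t]; the two are bisimilar in U(n)^s. Injectivity is completeness of IPC for U(n),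
   obtained by filtrating a Lindenbaum prime filter through the subformulas of the
   refuted implication. Surjectivity uses that U(n)_{\wedge,\to} is finite: a point is
   determined by its colour and its strict successors, and strict successors make its
   separating variable true, so induction on the number of false variables applies.
   The up-set generated by a point is then definable by a finite conjunction, the
   complement of its down-set by that conjunction implying the separating variable,
   and an arbitrary up-set is a meet of the latter. *)

Lemma list_choice (A B : Type) (L : list A) (R : A -> B -> Prop) :
  exists Bs : list B,
    (forall a, In a L -> (exists b, R a b) -> exists b, In b Bs /\ R a b) /\
    (forall b, In b Bs -> exists a, In a L /\ R a b).
Proof.
  induction L as [|a L [Bs [HBs HBs']]].
  - exists nil; split; [intros a []| intros b []].
  - destruct (classic (exists b, R a b)) as [[b Hb]|Hna].
    + exists (b :: Bs); split.
      * intros a' [<-|Ha'] Hex; [exists b; split; [left|]; auto|].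
        destruct (HBs a' Ha' Hex) as [b' [? ?]]; exists b'; split; [right|]; auto.
      * intros b' [<-|Hb']; [exists a; split; [left|]; auto|].
        destruct (HBs' b' Hb') as [a' [? ?]]; exists a'; split; [right|]; auto.
    + exists Bs; split.
      * intros a' [<-|Ha'] Hex; [contradiction| auto].
      * intros b' Hb'; destruct (HBs' b' Hb') as [a' [? ?]]; exists a'; split; [right|]; auto.
Qed.

Fixpoint sublists (A : Type) (l : list A) : list (list A) :=
  match l with nil => nil :: nil | a :: l' => map (cons a) (sublists l') ++ sublists l' end.

Lemma sublists_filter (A : Type) (l : list A) (P : A -> Prop) :
  exists S, In S (sublists l) /\ forall a, In a S <-> In a l /\ P a.
Proof.
  induction l as [|x l [S [HS HP]]]; simpl.
  - exists nil; split; [left; auto| intro a; split; [intros []| intros [[] _]]].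
  - destruct (classic (P x)) as [Hx|Hx].
    + exists (x :: S); split; [apply in_or_app; left; apply in_map; auto|].
      intro a; simpl; rewrite HP; split; [intros [<-|[]]|intros [[<-|]]]; auto.
    + exists S; split; [apply in_or_app; right; auto|].
      intro a; simpl; rewrite HP; split; [intros []|intros [[<-|]]]; auto; contradiction.
Qed.

Lemma memIn (T : eqType) (x : T) (s : list T) : x \in s -> In x s.
Proof.
  induction s as [|y s IH]; [by []|].
  rewrite seq.in_cons => /orP [/eqP ->|Hx]; [left| right]; auto.
Qed.

Definition decide (P : Prop) : bool := if excluded_middle_informative P then true else false.

Lemma decideP (P : Prop) : reflect P (decide P).
Proof. unfold decide; destruct excluded_middle_informative; constructor; auto. Qed.

Section Preorder.
Variables (W : Type) (R : W -> W -> Prop).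
Hypothesis R_trans : forall u v w, R u v -> R v w -> R u w.

Definition covers (L : list W) (w : W) : Prop :=
  forall v, R w v -> exists l, In l L /\ R v l /\ R l v.

Variable P : W -> Prop.

Definition maximal_above (w m : W) : Prop :=
  R w m /\ P m /\ forall u, R m u -> P u -> R u m.

Lemma maximal_above_covered k : forall (L : list W) (w v : W), length L <= k ->
  R w v -> P v ->
  (forall u, R v u -> P u -> ~ R u v -> exists l, In l L /\ R u l /\ R l u) ->
  exists m, maximal_above w m.
Proof.
  induction k as [|k IH]; intros L w v HL Hwv Hv HC.
  - exists v; split; auto; split; auto. intros u Hu HPu.
    apply NNPP; intro Hn. destruct (HC u Hu HPu Hn) as [l [Hl _]].
    destruct L; [destruct Hl| discriminate].
  - destruct (classic (exists u, R v u /\ P u /\ ~ R u v)) as [[u [Hvu [Hu Huv]]]|Hn].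
    + destruct (HC u Hvu Hu Huv) as [l [Hl [Hul Hlu]]].
      destruct (in_split _ _ Hl) as [L1 [L2 ->]].
      apply (IH (L1 ++ L2) w u); [|eauto|exact Hu|].
      * rewrite length_app /= -plus_n_Sm in HL. rewrite length_app. exact HL.
      * intros u' Hu' HPu' Hnu'.
        have Hnv : ~ R u' v by intro; apply Hnu'; eauto.
        destruct (HC u' (R_trans Hvu Hu') HPu' Hnv) as [l' [Hl' [H1 H2]]].
        apply in_app_or in Hl'. destruct Hl' as [Hl'|[<-|Hl']].
        -- exists l'; split; auto; apply in_or_app; auto.
        -- exfalso; apply Hnu'; eauto.
        -- exists l'; split; auto; apply in_or_app; auto.
    + exists v; split; auto; split; auto. intros u Hu HPu.
      apply NNPP; intro Hnu; apply Hn; exists u; auto.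
Qed.

Lemma maximal_above_exists (L : list W) (w : W) :
  R w w -> covers L w -> P w -> exists m, maximal_above w m.
Proof.
  intros Hww HL Hw. apply (@maximal_above_covered (length L) L w w); auto.
Qed.

End Preorder.

Section Deduction.
Variable n : nat.
Implicit Types (a b c : form n) (G L : list (form n)).

Lemma nd_weaken G a : nd G a -> forall G', List.incl G G' -> nd G' a.
Proof.
  induction 1; intros G' HG.
  - apply ndAx; auto.
  - apply ndAndI; auto.
  - eapply ndAndE1; eauto.
  - eapply ndAndE2; eauto.
  - apply ndOrI1; auto.
  - apply ndOrI2; auto.
  - eapply ndOrE; [apply IHnd1; auto| apply IHnd2 | apply IHnd3];
      intros g [<-|Hg]; [left| right| left| right]; auto.
  - apply ndImpI; apply IHnd; intros g [<-|Hg]; [left| right]; auto.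
  - eapply ndImpE; eauto.
  - apply ndBotE; auto.
Qed.

Lemma nd_cons_ctx G G' a :
  (forall g, In g G -> nd G' g) -> forall g, In g (a :: G) -> nd (a :: G') g.
Proof.
  intros HG g [<-|Hg]; [apply ndAx; left; auto|].
  eapply nd_weaken; [apply HG; auto| apply incl_tl, incl_refl].
Qed.

Lemma nd_cut G a : nd G a -> forall G', (forall g, In g G -> nd G' g) -> nd G' a.
Proof.
  induction 1; intros G' HG.
  - auto.
  - apply ndAndI; auto.
  - eapply ndAndE1; eauto.
  - eapply ndAndE2; eauto.
  - apply ndOrI1; auto.
  - apply ndOrI2; auto.
  - eapply ndOrE; [apply IHnd1; auto| apply IHnd2 | apply IHnd3]; apply nd_cons_ctx; auto.
  - apply ndImpI; apply IHnd; apply nd_cons_ctx; auto.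
  - eapply ndImpE; eauto.
  - apply ndBotE; auto.
Qed.

Lemma prov_nd G a : prov a -> nd G a.
Proof. intro H; eapply nd_weaken; [exact H| intros x []]. Qed.

Lemma nd_ax_hd G a : nd (a :: G) a.
Proof. apply ndAx; left; auto. Qed.

Lemma prov_Top : prov (@Top n).
Proof. apply ndImpI, nd_ax_hd. Qed.

Definition bigAnd L : form n := fold_right And Top L.
Definition bigOr L : form n := fold_right Or Bot L.

Lemma nd_bigAnd_elim L g : In g L -> nd (bigAnd L :: nil) g.
Proof.
  induction L as [|x L IH]; [intros []|].
  intros [->|Hg]; simpl.
  - eapply ndAndE1, nd_ax_hd.
  - eapply nd_cut; [apply IH; auto|]. intros y [<-|[]]. eapply ndAndE2, nd_ax_hd.
Qed.

End Deduction.

Section PrimeFilter.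
Variables (n : nat) (x : form n -> Prop).
Hypothesis Hx : prime_filter x.
Implicit Types (a b c : form n) (L : list (form n)).

Lemma pf_Top : x Top. Proof. by case: Hx. Qed.
Lemma pf_prov_imp a b : x a -> prov (Imp a b) -> x b. Proof. by case: Hx => _ H _ _ _; apply H. Qed.
Lemma pf_And a b : x a -> x b -> x (And a b). Proof. by case: Hx => _ _ H _ _; apply H. Qed.
Lemma pf_Bot : ~ x Bot. Proof. by case: Hx. Qed.
Lemma pf_Or a b : x (Or a b) -> x a \/ x b. Proof. by case: Hx => _ _ _ _ H; apply H. Qed.

Lemma pf_bigAnd L : (forall g, In g L -> x g) -> x (bigAnd L).
Proof.
  induction L as [|y L IH]; intro H; simpl; [apply pf_Top|].
  apply pf_And; [apply H; left| apply IH; intros; apply H; right]; auto.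
Qed.

Lemma pf_nd L c : (forall g, In g L -> x g) -> nd L c -> x c.
Proof.
  intros HL Hd. apply (pf_prov_imp (pf_bigAnd HL)), ndImpI.
  eapply nd_cut; [exact Hd|]. intros g Hg; apply nd_bigAnd_elim; auto.
Qed.

Lemma pf_mp a b : x (Imp a b) -> x a -> x b.
Proof.
  intros Hab Ha; apply (@pf_nd (Imp a b :: a :: nil)).
  - intros g [<-|[<-|[]]]; auto.
  - eapply ndImpE; apply ndAx; [left|right; left]; auto.
Qed.

Lemma pf_AndE a b : x (And a b) <-> x a /\ x b.
Proof.
  split; [|intros []; apply pf_And; auto].
  intro H; split; apply (@pf_nd (And a b :: nil)); try (intros g [<-|[]]; auto).
  - eapply ndAndE1, nd_ax_hd.
  - eapply ndAndE2, nd_ax_hd.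
Qed.

Lemma pf_OrE a b : x (Or a b) <-> x a \/ x b.
Proof.
  split; [apply pf_Or|].
  intros [H|H]; eapply pf_prov_imp; eauto; apply ndImpI;
    [apply ndOrI1| apply ndOrI2]; apply nd_ax_hd.
Qed.

Lemma pf_bigOr L : x (bigOr L) -> exists c, In c L /\ x c.
Proof.
  induction L as [|y L IH]; simpl; intro H; [exfalso; apply pf_Bot; auto|].
  destruct (pf_Or H) as [Hy|HL]; [exists y; split; [left|]; auto|].
  destruct (IH HL) as [c [Hc Hxc]]; exists c; split; [right|]; auto.
Qed.

End PrimeFilter.

Section Kripke.
Variable n : nat.

Record kmodel := KModel {
  kworld : Type;
  kle : kworld -> kworld -> Prop;
  kval : kworld -> 'I_n -> Prop;
  kle_refl : forall w, kle w w;
  kle_trans : forall u v w, kle u v -> kle v w -> kle u w;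
  kval_mon : forall u v i, kle u v -> kval u i -> kval v i }.

Fixpoint forces (M : kmodel) (w : kworld M) (a : form n) : Prop :=
  match a with
  | Var i => kval w i
  | Bot => False
  | And a b => forces w a /\ forces w b
  | Or a b => forces w a \/ forces w b
  | Imp a b => forall v, kle w v -> forces v a -> forces v b
  end.

Variable M : kmodel.

Lemma forces_mon a (u v : kworld M) : kle u v -> forces u a -> forces v a.
Proof.
  revert u v; induction a; simpl; intros u v Huv H.
  - eapply kval_mon; eauto.
  - auto.
  - destruct H; split; eauto.
  - destruct H; [left|right]; eauto.
  - intros w Hvw; apply H; eapply kle_trans; eauto.
Qed.

Lemma nd_sound G a : nd G a ->
  forall w : kworld M, (forall g, In g G -> forces w g) -> forces w a.
Proof.
  induction 1; intros w Hw; simpl in *.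
  - auto.
  - split; auto.
  - destruct (IHnd w Hw); auto.
  - destruct (IHnd w Hw); auto.
  - left; auto.
  - right; auto.
  - destruct (IHnd1 w Hw) as [Ha|Hb]; [apply IHnd2|apply IHnd3]; intros g [<-|Hg]; auto.
  - intros v Hwv Hv; apply IHnd; intros g [<-|Hg]; auto.
    eapply forces_mon; eauto.
  - apply (IHnd1 w Hw w (kle_refl w)); auto.
  - destruct (IHnd w Hw).
Qed.

Definition theory (w : kworld M) : form n -> Prop := fun a => forces w a.

Lemma theory_pf w : prime_filter (theory w).
Proof.
  split; unfold theory; simpl; auto.
  intros a b Ha Hab. apply (nd_sound Hab (w := w)); [intros g []|apply kle_refl|auto].
Qed.

Lemma theory_mon u v : kle u v -> Defs.incl (theory u) (theory v).
Proof. intros H a; apply forces_mon; auto. Qed.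

(* Take [m] maximal above [w] with its theory inside [y]. A formula [psi] of [y]
   missed at [m] gives [m |= psi -> bigOr chis], where each [chi] in [chis] holds at
   some strictly larger world but is not in [y]; this contradicts primeness of [y]. *)
Lemma theory_extension (w : kworld M) (L : list (kworld M)) : covers (@kle M) L w ->
  forall y, prime_filter y -> Defs.incl (theory w) y -> exists v, kle w v /\ same y (theory v).
Proof.
  intros HL y Hy Hwy.
  destruct (@maximal_above_exists _ (@kle M) (@kle_trans M) (fun v => Defs.incl (theory v) y)
      L w (kle_refl w) HL Hwy) as [m [Hwm [Hmy Hmax]]].
  exists m; split; auto. intro psi; split; [|apply Hmy].
  intro Hpsi. apply NNPP; intro Hnm.
  destruct (@list_choice _ _ L (fun l c => kle m l /\ ~ kle l m /\ forces l c /\ ~ y c))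
    as [chis [Hchis Hchis']].
  have Hf : forces m (Imp psi (bigOr chis)).
  { intros v Hmv Hv.
    destruct (classic (kle v m)) as [Hvm|Hvm]; [exfalso; apply Hnm; eapply forces_mon; eauto|].
    destruct (HL v (kle_trans Hwm Hmv)) as [l [Hl [Hvl Hlv]]].
    have Hml : kle m l by eapply kle_trans; eauto.
    have Hlm : ~ kle l m by intro; apply Hvm; eapply kle_trans; eauto.
    destruct (Hchis l Hl) as [c [Hc [_ [_ [Hlc _]]]]].
    - apply NNPP; intro Hn. apply Hlm, Hmax; auto.
      intros c Hlc; apply NNPP; intro Hyc; apply Hn; exists c; auto.
    - clear -Hc Hlc Hlv. induction chis as [|d chis IH]; simpl; [destruct Hc|].
      destruct Hc as [<-|Hc]; [left|right]; eauto using forces_mon. }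
  destruct (pf_bigOr Hy (pf_mp Hy (Hmy _ Hf) Hpsi)) as [c [Hc Hyc]].
  destruct (Hchis' c Hc) as [l [_ [_ [_ [_ Hnyc]]]]]; auto.
Qed.

Lemma theory_finite_upset (w : kworld M) (L : list (kworld M)) :
  covers (@kle M) L w -> finite_upset (theory w).
Proof.
  intros HL. exists (map theory L). intros y Hy Hwy.
  destruct (theory_extension HL Hy Hwy) as [v [Hwv Hyv]].
  destruct (HL v Hwv) as [l [Hl [Hvl Hlv]]].
  exists (theory l); split; [apply in_map; auto|].
  intro a; rewrite Hyv; split; apply forces_mon; auto.
Qed.

End Kripke.

Section Lindenbaum.
Variable n : nat.
Implicit Types (a b c : form n) (L : list (form n)).

Fixpoint form_to_tree (a : form n) : GenTree.tree 'I_n :=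
  match a with
  | Var i => GenTree.Leaf i
  | Bot => GenTree.Node 0 [::]
  | And a b => GenTree.Node 1 [:: form_to_tree a; form_to_tree b]
  | Or a b => GenTree.Node 2 [:: form_to_tree a; form_to_tree b]
  | Imp a b => GenTree.Node 3 [:: form_to_tree a; form_to_tree b]
  end.

Fixpoint tree_to_form (t : GenTree.tree 'I_n) : form n :=
  match t with
  | GenTree.Leaf i => Var i
  | GenTree.Node 1 [:: t1; t2] => And (tree_to_form t1) (tree_to_form t2)
  | GenTree.Node 2 [:: t1; t2] => Or (tree_to_form t1) (tree_to_form t2)
  | GenTree.Node 3 [:: t1; t2] => Imp (tree_to_form t1) (tree_to_form t2)
  | _ => Bot
  end.

Lemma form_to_treeK : cancel form_to_tree tree_to_form.
Proof. intro a; induction a; simpl; try rewrite IHa1 IHa2; auto. Qed.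

Definition nth_form (k : nat) : form n :=
  if unpickle k is Some t then tree_to_form t else Bot.

Lemma nth_form_surj a : exists k, nth_form k = a.
Proof. exists (pickle (form_to_tree a)). by rewrite /nth_form pickleK form_to_treeK. Qed.

Definition derives (S : form n -> Prop) c := exists L, (forall g, In g L -> S g) /\ nd L c.

Lemma derives_add (S : form n -> Prop) a c : derives (fun g => S g \/ g = a) c ->
  exists L, (forall g, In g L -> S g) /\ nd (a :: L) c.
Proof.
  intros [L [HL Hd]].
  have [L' [HL' Hincl]] : exists L', (forall g, In g L' -> S g) /\ List.incl L (a :: L').
  { clear Hd; induction L as [|g L IH].
    - exists nil; split; [intros g []| intros g []].
    - destruct IH as [L' [H1 H2]]; [intros; apply HL; right; auto|].
      destruct (HL g (or_introl erefl)) as [Hg|<-].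
      + exists (g :: L'); split; [intros h [<-|Hh]; auto|].
        intros h [<-|Hh]; [right; left; auto|].
        destruct (H2 h Hh) as [<-|Hh']; [left|right; right]; auto.
      + exists L'; split; auto. intros h [<-|Hh]; [left|]; auto. }
  exists L'; split; auto. eapply nd_weaken; eauto.
Qed.

Section Chain.
Variables (S : form n -> Prop) (b : form n).

Fixpoint chain (k : nat) : form n -> Prop :=
  match k with
  | 0 => S
  | k'.+1 =>
      if excluded_middle_informative (derives (fun g => chain k' g \/ g = nth_form k') b)
      then chain k' else (fun g => chain k' g \/ g = nth_form k')
  end.

Lemma chain_mono k k' g : k <= k' -> chain k g -> chain k' g.
Proof.
  intros Hk; induction k' as [|k' IH].
  - by destruct k.
  - rewrite leq_eqVlt in Hk. case/orP: Hk => [/eqP ->|Hk] // Hg.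
    simpl; destruct excluded_middle_informative; [|left]; apply IH; auto.
Qed.

Hypothesis S_not_derives : ~ derives S b.

Lemma chain_not_derives k : ~ derives (chain k) b.
Proof. induction k as [|k IH]; simpl; auto. destruct excluded_middle_informative; auto. Qed.

Definition saturation : form n -> Prop := fun g => exists k, chain k g.

Lemma saturation_finite L : (forall g, In g L -> saturation g) ->
  exists k, forall g, In g L -> chain k g.
Proof.
  induction L as [|a L IH]; intro H; [exists 0; intros g []|].
  destruct IH as [k Hk]; [intros; apply H; right; auto|].
  destruct (H a (or_introl erefl)) as [k' Hk'].
  exists (maxn k k'); intros g [<-|Hg]; [apply (chain_mono (leq_maxr k k'))| apply (chain_mono (leq_maxl k k'))]; auto.
Qed.

Lemma saturation_not_derives : ~ derives saturation b.
Proof.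
  intros [L [HL Hd]]. destruct (saturation_finite HL) as [k Hk].
  apply (@chain_not_derives k); exists L; auto.
Qed.

Lemma saturation_add c : ~ (exists L, (forall g, In g L -> saturation g) /\ nd (c :: L) b) ->
  saturation c.
Proof.
  intro Hn. destruct (nth_form_surj c) as [k Hk].
  exists k.+1; simpl; destruct excluded_middle_informative as [Hd|]; [|right; auto].
  exfalso; apply Hn. destruct (derives_add Hd) as [L [HL Hd']].
  exists L; split; [intros g Hg; exists k; auto| rewrite -Hk; auto].
Qed.

Lemma saturation_closed c : derives saturation c -> saturation c.
Proof.
  intros [L1 [H1 Hd1]]. apply saturation_add. intros [L2 [H2 Hd2]].
  apply saturation_not_derives. exists (L1 ++ L2); split.
  - intros g Hg; apply in_app_or in Hg; destruct Hg; auto.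
  - eapply nd_cut; [exact Hd2|]. intros g [<-|Hg].
    + eapply nd_weaken; [exact Hd1| apply incl_appl, incl_refl].
    + apply ndAx; apply in_or_app; right; auto.
Qed.

Lemma saturation_pf : prime_filter saturation.
Proof.
  split.
  - apply saturation_closed; exists nil; split; [intros g []| apply prov_Top].
  - intros a c Ha Hp. apply saturation_closed. exists (a :: nil); split; [intros g [<-|[]]; auto|].
    eapply ndImpE; [apply prov_nd; exact Hp| apply nd_ax_hd].
  - intros a c Ha Hc. apply saturation_closed.
    exists (a :: c :: nil); split; [intros g [<-|[<-|[]]]; auto|].
    apply ndAndI; apply ndAx; [left|right; left]; auto.
  - intro H; apply saturation_not_derives. exists (Bot :: nil); split; [intros g [<-|[]]; auto|].
    apply ndBotE, nd_ax_hd.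
  - intros a c Hac. apply NNPP; intros Hn; apply not_or_and in Hn; destruct Hn as [Ha Hc].
    destruct (NNPP _ (fun H => Ha (saturation_add H))) as [La [HLa Hda]].
    destruct (NNPP _ (fun H => Hc (saturation_add H))) as [Lc [HLc Hdc]].
    apply saturation_not_derives. exists (Or a c :: La ++ Lc); split.
    + intros g [<-|Hg]; auto. apply in_app_or in Hg; destruct Hg; auto.
    + eapply ndOrE; [apply nd_ax_hd| |]; [eapply nd_weaken; [exact Hda|] | eapply nd_weaken; [exact Hdc|]];
        intros g [<-|Hg]; [left| right; right; apply in_or_app| left| right; right; apply in_or_app]; auto.
Qed.

Lemma saturation_notb : ~ saturation b.
Proof.
  intro H; apply saturation_not_derives; exists (b :: nil); split; [intros g [<-|[]]; auto| apply nd_ax_hd].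
Qed.

End Chain.

Lemma lindenbaum (S : form n -> Prop) b : ~ derives S b ->
  exists y, prime_filter y /\ (forall a, S a -> y a) /\ ~ y b.
Proof.
  intro H. exists (saturation S b); split; [apply saturation_pf; auto|].
  split; [intros a Ha; exists 0; auto| apply saturation_notb; auto].
Qed.

Lemma pf_extension (x : form n -> Prop) a b : prime_filter x -> ~ x (Imp a b) ->
  exists y, prime_filter y /\ Defs.incl x y /\ y a /\ ~ y b.
Proof.
  intros Hx Hab.
  destruct (@lindenbaum (fun c => x c \/ c = a) b) as [y [Hy [Hxy Hyb]]].
  - intro Hd. destruct (derives_add Hd) as [L [HL Hd']].
    apply Hab. eapply pf_nd; eauto. apply ndImpI; auto.
  - exists y; split; [|split; [intros c Hc| split]]; auto.
Qed.

End Lindenbaum.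

Section CanonicalModel.
Variable n : nat.
Implicit Types (a b c : form n) (x y z : upoint n).

Lemma ule_refl x : ule x x. Proof. by []. Qed.
Lemma ule_trans x y z : ule x y -> ule y z -> ule x z. Proof. intros Hxy Hyz a Ha; auto. Qed.
Lemma ucol_mon x y i : ule x y -> ucol x i -> ucol y i. Proof. intro H; apply H. Qed.

Lemma upoint_pf x : prime_filter (proj1_sig x). Proof. exact (proj1 (proj2_sig x)). Qed.
Lemma upoint_finite_upset x : finite_upset (proj1_sig x). Proof. exact (proj2 (proj2_sig x)). Qed.

Definition theory_upoint (M : kmodel n) (w : kworld M) (Hw : finite_upset (theory w)) : upoint n :=
  exist _ (theory w) (conj (theory_pf w) Hw).

Lemma finite_upset_covers (T : Type) (p : T -> form n -> Prop) (X : form n -> Prop) :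
  finite_upset X -> (forall t, prime_filter (p t)) ->
  exists L : list T, forall t, Defs.incl X (p t) -> exists t', In t' L /\ same (p t) (p t').
Proof.
  intros [l Hl] Hp.
  destruct (@list_choice _ T l (fun Y t => same (p t) Y)) as [L [HL _]].
  exists L; intros t Ht. destruct (Hl (p t) (Hp t) Ht) as [Y [HY HtY]].
  destruct (HL Y HY (ex_intro _ t HtY)) as [t' [Ht' Ht'Y]].
  exists t'; split; auto. intro a; rewrite HtY Ht'Y; tauto.
Qed.

Lemma upoint_covers x : exists L, covers (@ule n) L x.
Proof.
  destruct (@finite_upset_covers _ (@proj1_sig _ _) _ (upoint_finite_upset x) upoint_pf) as [L HL].
  exists L; intros y Hxy. destruct (HL y Hxy) as [l [Hl Hyl]].
  exists l; split; [|split]; auto; intros a; apply Hyl.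
Qed.

Lemma upoint_Imp x a b :
  proj1_sig x (Imp a b) <-> forall y, ule x y -> proj1_sig y a -> proj1_sig y b.
Proof.
  split; [intros H y Hxy; apply (pf_mp (upoint_pf y)), Hxy, H|].
  intro H. apply NNPP; intro Hn.
  destruct (pf_extension (upoint_pf x) Hn) as [y [Hy [Hxy [Hya Hyb]]]].
  have Hfin : finite_upset y.
  { destruct (upoint_finite_upset x) as [l Hl]. exists l.
    intros z Hz Hyz; apply Hl; auto. intros c Hc; apply Hyz, Hxy, Hc. }
  apply Hyb, (H (exist _ y (conj Hy Hfin))); auto.
Qed.

(* In the implication case, a successor of [x] refuting [b] lies below [x] again,
   since every strict successor satisfies [b]. *)
Lemma separated_of_maximal_refutation (b : iform n) x :
  ~ proj1_sig x (emb b) -> (forall z, ult x z -> proj1_sig z (emb b)) -> separated x.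
Proof.
  revert x; induction b as [i| |b1 IH1 b2 IH2|b1 IH1 b2 IH2]; intros x Hn Hs; simpl in *.
  - exists i; split; auto.
  - exfalso; apply Hn, (pf_Top (upoint_pf x)).
  - rewrite (pf_AndE (upoint_pf x)) in Hn.
    have Hs' z : ult x z -> proj1_sig z (emb b1) /\ proj1_sig z (emb b2)
      by intro Hz; apply (pf_AndE (upoint_pf z)), Hs, Hz.
    destruct (classic (proj1_sig x (emb b1))) as [H1|H1];
      [apply IH2; [tauto| apply Hs'] | apply IH1; [| apply Hs']]; auto.
  - rewrite upoint_Imp in Hn. apply not_all_ex_not in Hn. destruct Hn as [y Hy].
    apply imply_to_and in Hy; destruct Hy as [Hxy Hy].
    apply imply_to_and in Hy; destruct Hy as [Hy1 Hy2].
    have Hyx : ule y x.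
    { apply NNPP; intro Hn. apply Hy2, (pf_mp (upoint_pf y) (Hs y (conj Hxy Hn)) Hy1). }
    apply IH2; [intro H; apply Hy2, Hxy, H|].
    intros z [Hxz Hzx]. apply (pf_mp (upoint_pf z) (Hs z (conj Hxz Hzx))), Hxz, Hyx, Hy1.
Qed.

Lemma separated_refutation c (d : iform n) x : proj1_sig x c -> ~ proj1_sig x (emb d) ->
  exists m, ule x m /\ separated m /\ proj1_sig m c /\ ~ proj1_sig m (emb d).
Proof.
  intros Hc Hd. destruct (upoint_covers x) as [L HL].
  destruct (@maximal_above_exists _ (@ule n) (@ule_trans) (fun z => proj1_sig z c /\ ~ proj1_sig z (emb d))
      L x (@ule_refl x) HL (conj Hc Hd)) as [m [Hxm [[Hmc Hmd] Hmax]]].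
  exists m; split; [|split]; auto.
  apply (separated_of_maximal_refutation Hmd). intros z [Hmz Hzm].
  apply NNPP; intro Hn. apply Hzm, Hmax; auto.
Qed.

End CanonicalModel.

Section SeparatedModel.
Variable n : nat.
Implicit Types (a b : form n) (x y : upoint n) (s t : spoint n).

Definition sle s t := ule (proj1_sig s) (proj1_sig t).

Lemma sle_refl s : sle s s. Proof. by []. Qed.
Lemma sle_trans s t u : sle s t -> sle t u -> sle s u. Proof. apply ule_trans. Qed.

Definition Usep : kmodel n :=
  @KModel n (spoint n) sle (fun s => ucol (proj1_sig s)) sle_refl sle_trans
    (fun s t i => @ucol_mon n (proj1_sig s) (proj1_sig t) i).

Lemma spoint_covers s : exists L, covers sle L s.
Proof.
  destruct (@finite_upset_covers n (spoint n) (fun t => proj1_sig (proj1_sig t)) _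
      (upoint_finite_upset (proj1_sig s)) (fun t => upoint_pf (proj1_sig t))) as [L HL].
  exists L; intros t Hst. destruct (HL t Hst) as [l [Hl Htl]].
  exists l; split; [|split]; auto; intros a; apply Htl.
Qed.

Lemma Usep_finite_upset s : finite_upset (theory (M := Usep) s).
Proof. destruct (spoint_covers s) as [L HL]. exact (@theory_finite_upset n Usep s L HL). Qed.

Definition usep_point s : upoint n := theory_upoint (Usep_finite_upset s).

Lemma usep_point_mon s t : sle s t -> ule (usep_point s) (usep_point t).
Proof. apply (theory_mon (M := Usep)). Qed.

Lemma usep_point_pmorphism : pmorphism usep_point.
Proof.
  split; [apply usep_point_mon| by []|].
  intros s y Hsy. destruct (spoint_covers s) as [L HL].
  destruct (@theory_extension n Usep s L HL _ (upoint_pf y) Hsy) as [t [Hst Hyt]].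
  exists t; split; auto. intro a; rewrite Hyt; tauto.
Qed.

Lemma pmorphism_forces f : pmorphism f ->
  forall a s, proj1_sig (f s) a <-> forces (M := Usep) s a.
Proof.
  intros [Hmon Hcol Hback] a. induction a as [i| |a1 IH1 a2 IH2|a1 IH1 a2 IH2|a1 IH1 a2 IH2];
    intro s; simpl.
  - apply Hcol.
  - split; [apply (pf_Bot (upoint_pf (f s)))| tauto].
  - by rewrite (pf_AndE (upoint_pf _)) IH1 IH2.
  - by rewrite (pf_OrE (upoint_pf _)) IH1 IH2.
  - rewrite upoint_Imp. split.
    + intros H t Hst Ht. rewrite -IH2. apply H; [apply Hmon; auto| rewrite IH1; auto].
    + intros H y Hy Hya. destruct (Hback s y Hy) as [t [Hst Hty]].
      apply Hty. rewrite IH2. apply H; auto. rewrite -IH1. apply Hty; auto.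
Qed.

Lemma Uai_iff_image y : Uai y <-> exists s, ueq (usep_point s) y.
Proof.
  split.
  - intros [f [Hf [s Hs]]]. exists s. intro a. rewrite -Hs (pmorphism_forces Hf). tauto.
  - intros [s Hs]. exists usep_point; split; [apply usep_point_pmorphism| exists s; auto].
Qed.

Lemma Uai_usep_point s : Uai (usep_point s).
Proof. apply Uai_iff_image; exists s; intro a; tauto. Qed.

Lemma usep_point_iform (a : iform n) s :
  proj1_sig (usep_point s) (emb a) <-> proj1_sig (proj1_sig s) (emb a).
Proof.
  revert s; induction a as [i| |b1 IH1 b2 IH2|b1 IH1 b2 IH2]; intro s.
  - by [].
  - split; intros _; [apply (pf_Top (upoint_pf _))| intros v _ H; exact H].
  - simpl. rewrite (pf_AndE (upoint_pf _)) -IH1 -IH2; tauto.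
  - split.
    + intro H. apply NNPP; intro Hn.
      rewrite upoint_Imp in Hn. apply not_all_ex_not in Hn. destruct Hn as [y Hy].
      apply imply_to_and in Hy; destruct Hy as [Hsy Hy].
      apply imply_to_and in Hy; destruct Hy as [Hy1 Hy2].
      destruct (separated_refutation Hy1 Hy2) as [m [Hym [Hm [Hm1 Hm2]]]].
      apply Hm2, (IH2 (exist _ m Hm)), H; [exact (ule_trans Hsy Hym)| apply IH1, Hm1].
    + intros H t Hst Ht. apply IH2. apply IH1 in Ht. apply (pf_mp (upoint_pf _) (Hst _ H) Ht).
Qed.

End SeparatedModel.

Section Lifting.
Variable n : nat.
Implicit Types (x y z m t : upoint n) (s : spoint n).

Definition iincl x y := forall a : iform n, proj1_sig x (emb a) -> proj1_sig y (emb a).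
Definition isame x y := forall a : iform n, proj1_sig x (emb a) <-> proj1_sig y (emb a).

Definition bigIAnd (l : list (iform n)) : iform n := fold_right IAnd ITop l.

Lemma upoint_bigIAnd x l :
  proj1_sig x (emb (bigIAnd l)) <-> forall b, In b l -> proj1_sig x (emb b).
Proof.
  induction l as [|c l IH]; simpl.
  - split; [intros _ b []| intros _; apply (pf_Top (upoint_pf x))].
  - rewrite (pf_AndE (upoint_pf x)) IH.
    split; [intros [? ?] b [<-|]| intro H; split; [apply H; left| intros; apply H; right]]; auto.
Qed.

Lemma sep_var_Imp t q (b : iform n) : ~ ucol t q -> (forall y, ult t y -> ucol y q) ->
  ~ proj1_sig t (emb b) -> proj1_sig t (emb (IImp b (IVar q))).
Proof.
  intros Hq Hqs Hb. apply upoint_Imp. intros y Hty Hy.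
  apply Hqs; split; [auto| intro Hyt; apply Hb, Hyt, Hy].
Qed.

(* If [a] held in [t] but not in [m], then [m] would force
   [(a /\ /\_i (b_i -> q)) -> q], where the [b_i] are (\wedge,\to)-formulas true in the
   strict successors of [m] and false in [t]; this formula would transfer to [t],
   where each [b_i -> q] holds because [q] separates [t]. *)
Lemma maximal_iincl_isame t m q : ~ ucol t q -> (forall y, ult t y -> ucol y q) ->
  iincl m t -> (forall z, ule m z -> iincl z t -> ule z m) -> iincl t m.
Proof.
  intros Hq Hqs Hmt Hmax a Ha. apply NNPP; intro Hna.
  destruct (upoint_covers m) as [L HL].
  destruct (@list_choice _ _ L (fun l b => ult m l /\ proj1_sig l (emb b) /\ ~ proj1_sig t (emb b)))
    as [bs [Hbs Hbs']].
  set gam := IImp (IAnd a (bigIAnd (map (fun b => IImp b (IVar q)) bs))) (IVar q).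
  have Hgam : proj1_sig m (emb gam).
  { apply upoint_Imp. intros y Hmy Hy.
    move: Hy; rewrite /= (pf_AndE (upoint_pf y)) => -[Hya Hyb].
    destruct (classic (ule y m)) as [Hym|Hym]; [exfalso; apply Hna, Hym, Hya|].
    destruct (HL y Hmy) as [l [Hl [Hyl Hly]]].
    have Hml : ult m l by split; [exact (ule_trans Hmy Hyl)| intro; apply Hym, (ule_trans Hyl); auto].
    destruct (Hbs l Hl) as [b [Hb [_ [Hlb _]]]].
    - apply NNPP; intro Hn. apply (proj2 Hml), Hmax; [apply Hml|].
      intros c Hc; apply NNPP; intro Hc'; apply Hn; exists c; auto.
    - have Hbq := proj1 (upoint_bigIAnd y _) Hyb (IImp b (IVar q)) (in_map _ _ _ Hb).
      exact (pf_mp (upoint_pf y) Hbq (Hly _ Hlb)). }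
  apply Hq, (pf_mp (upoint_pf t) (Hmt _ Hgam)). simpl.
  apply (pf_AndE (upoint_pf t)); split; [exact Ha|].
  apply (upoint_bigIAnd t). intros c Hc. apply in_map_iff in Hc. destruct Hc as [b [<- Hb]].
  destruct (Hbs' b Hb) as [l [_ [_ [_ Hb']]]]. apply sep_var_Imp; auto.
Qed.

Lemma separated_lift t u0 : separated t -> iincl u0 t ->
  exists u, ule u0 u /\ separated u /\ isame u t.
Proof.
  intros [q [Hq Hqs]] H0. destruct (upoint_covers u0) as [L HL].
  destruct (@maximal_above_exists _ (@ule n) (@ule_trans n) (fun z => iincl z t)
      L u0 (@ule_refl n u0) HL H0) as [m [Hum [Hmt Hmax]]].
  have Htm := maximal_iincl_isame Hq Hqs Hmt Hmax.
  exists m; split; [|split]; auto; [|intro a; split; auto].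
  exists q; split; [intro H; apply Hq, (Hmt (IVar q)), H|].
  intros z [Hmz Hzm].
  have [b [Hzb Htb]] : exists b : iform n, proj1_sig z (emb b) /\ ~ proj1_sig t (emb b).
  { apply NNPP; intro Hn; apply Hzm, Hmax; auto.
    intros b Hb; apply NNPP; intro Hb'; apply Hn; exists b; auto. }
  exact (pf_mp (upoint_pf z) (Hmz _ (Htm _ (sep_var_Imp Hq Hqs Htb))) Hzb).
Qed.

(* The back-and-forth condition of the bisimulation is [separated_lift]. *)
Lemma isame_forces (phi : form n) s s' : isame (proj1_sig s) (proj1_sig s') ->
  forces (M := Usep n) s phi <-> forces (M := Usep n) s' phi.
Proof.
  revert s s'; induction phi as [i| |a IHa b IHb|a IHa b IHb|a IHa b IHb]; intros s s' Hss'; simpl.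
  - exact (Hss' (IVar i)).
  - tauto.
  - by rewrite (IHa s s' Hss') (IHb s s' Hss').
  - by rewrite (IHa s s' Hss') (IHb s s' Hss').
  - have Himp r r' : isame (proj1_sig r) (proj1_sig r') ->
        forces (M := Usep n) r (Imp a b) -> forces (M := Usep n) r' (Imp a b).
    { intros Hrr' H t' Hrt' Ha.
      destruct (@separated_lift (proj1_sig t') (proj1_sig r) (proj2_sig t')) as [u [Hru [Hu Hut]]].
      - intros c Hc. apply Hrt', Hrr', Hc.
      - have Hu't : isame (proj1_sig (exist _ u Hu : spoint n)) (proj1_sig t') := Hut.
        apply (IHb _ t' Hu't), H; [exact Hru| apply (IHa _ t' Hu't), Ha]. }
    split; apply Himp; auto. intro c; rewrite Hss'; tauto.
Qed.

Lemma iincl_usep_point s s' : iincl (proj1_sig s) (proj1_sig s') ->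
  ule (usep_point s) (usep_point s').
Proof.
  intro H. destruct (separated_lift (proj2_sig s') H) as [u [Hsu [Hu Hus']]].
  set su := exist _ u Hu : spoint n.
  intros a Ha. apply (isame_forces a (s := su) Hus').
  exact (forces_mon (M := Usep n) (v := su) Hsu Ha).
Qed.

Lemma Uai_image_iincl x y s s' : ueq (usep_point s) x -> ueq (usep_point s') y ->
  iincl x y -> iincl (proj1_sig s) (proj1_sig s').
Proof.
  intros Hs Hs' H a Ha. apply usep_point_iform, Hs', H, Hs, usep_point_iform, Ha.
Qed.

Lemma Uai_ule_of_iincl x y : Uai x -> Uai y -> iincl x y -> ule x y.
Proof.
  rewrite !Uai_iff_image. intros [s Hs] [s' Hs'] H a Ha.
  apply Hs', (iincl_usep_point (Uai_image_iincl Hs Hs' H)), Hs, Ha.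
Qed.

Lemma Uai_separated x : Uai x ->
  exists q, ~ ucol x q /\ forall y, Uai y -> ult x y -> ucol y q.
Proof.
  intro Hx. pose proof Hx as Hx'. rewrite Uai_iff_image in Hx. destruct Hx as [s Hs].
  destruct (proj2_sig s) as [q [Hq Hqs]]. exists q; split.
  - intro H. apply Hq, (usep_point_iform (IVar q) s), (proj2 (Hs _) H).
  - intros y Hy [Hxy Hyx]. pose proof Hy as Hy'. rewrite Uai_iff_image in Hy. destruct Hy as [s' Hs'].
    have Hss' : iincl (proj1_sig s) (proj1_sig s') by apply (Uai_image_iincl Hs Hs'); intros a; apply Hxy.
    destruct (separated_lift (proj2_sig s') Hss') as [u [Hsu [Hu Hus']]].
    destruct (classic (ule u (proj1_sig s))) as [Hus|Hus].
    + exfalso; apply Hyx, Uai_ule_of_iincl; auto.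
      intros a Ha. apply Hs, usep_point_iform, Hus, Hus', usep_point_iform, Hs', Ha.
    + apply Hs', (usep_point_iform (IVar q) s'), (Hus' (IVar q)), Hqs. split; auto.
Qed.

Lemma Uai_Imp x a b : Uai x ->
  proj1_sig x (Imp a b) <-> forall y, Uai y -> ule x y -> proj1_sig y a -> proj1_sig y b.
Proof.
  intro Hx. split; [intros H y _; apply upoint_Imp, H|].
  intro H. rewrite Uai_iff_image in Hx. destruct Hx as [s Hs].
  apply Hs. apply NNPP; intro Hn. simpl in Hn. unfold theory in Hn. simpl in Hn.
  apply not_all_ex_not in Hn. destruct Hn as [t Hn].
  apply imply_to_and in Hn; destruct Hn as [Hst Hn].
  apply imply_to_and in Hn; destruct Hn as [Hta Htb].
  apply Htb, (H (usep_point t) (Uai_usep_point t)); auto.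
  intros c Hc. apply (usep_point_mon Hst), Hs, Hc.
Qed.

End Lifting.

Section Finiteness.
Variable n : nat.
Implicit Types (x y z : upoint n).

Definition colours x : {set 'I_n} := [set i | decide (ucol x i)].

Lemma in_colours x i : i \in colours x <-> ucol x i.
Proof. rewrite inE; split; move/decideP; auto. Qed.

Lemma ult_ueq x y y' : ult x y -> ueq y y' -> ult x y'.
Proof.
  intros [Hxy Hyx] Hyy'; split; [intros a Ha; apply Hyy', Hxy, Ha|].
  intro H; apply Hyx; intros a Ha; apply H, Hyy', Ha.
Qed.

(* The separating variable of [x] is false at [x] and true at every strict successor. *)
Lemma Uai_ult_card x y : Uai x -> Uai y -> ult x y -> #|~: colours y| < #|~: colours x|.
Proof.
  intros Hx Hy Hxy. apply proper_card. rewrite properC.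
  destruct (Uai_separated Hx) as [q [Hq Hqs]].
  apply/properP; split.
  - apply/subsetP => i /in_colours Hi; apply/in_colours; apply (proj1 Hxy), Hi.
  - exists q; [apply/in_colours; apply Hqs; auto| apply/negP => /in_colours; exact Hq].
Qed.

Lemma Uai_determined x x' : Uai x -> Uai x' -> colours x = colours x' ->
  (forall y, Uai y -> ult x y <-> ult x' y) -> ueq x x'.
Proof.
  intros Hx Hx' Hc Hs.
  have Himp u u' (b c : iform n) : Uai u ->
      (forall y, Uai y -> ult u' y -> ult u y) ->
      (proj1_sig u' (emb b) -> proj1_sig u (emb b)) -> (proj1_sig u (emb c) -> proj1_sig u' (emb c)) ->
      (forall y, Uai y -> ule u y -> proj1_sig y (emb b) -> proj1_sig y (emb c)) ->
      forall y, Uai y -> ule u' y -> proj1_sig y (emb b) -> proj1_sig y (emb c).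
  { intros Hu Hsuc Hb Hc' H y Hy Hu'y Hyb.
    destruct (classic (ule y u')) as [Hyu'|Hyu'].
    - apply Hu'y, Hc', H; [exact Hu| apply ule_refl| apply Hb, Hyu', Hyb].
    - apply H; auto. exact (proj1 (Hsuc y Hy (conj Hu'y Hyu'))). }
  have E : isame x x'.
  { intro a; induction a as [i| |b IHb c IHc|b IHb c IHc]; simpl.
    - change (ucol x i <-> ucol x' i). by rewrite -!in_colours Hc.
    - split; intros; apply pf_Top, upoint_pf.
    - by rewrite (pf_AndE (upoint_pf x)) (pf_AndE (upoint_pf x')) IHb IHc.
    - rewrite (Uai_Imp _ _ Hx) (Uai_Imp _ _ Hx').
      split; apply Himp; auto; try tauto; intros y Hy; rewrite (Hs y Hy); auto. }
  intro a; split; [apply (Uai_ule_of_iincl Hx Hx')| apply (Uai_ule_of_iincl Hx' Hx)];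
    intros b; apply E.
Qed.

Lemma Uai_finite_below k : exists L : list (upoint n), (forall l, In l L -> Uai l) /\
  forall x, Uai x -> #|~: colours x| < k -> exists l, In l L /\ ueq x l.
Proof.
  induction k as [|k [Lk [HLk HLk']]]; [exists nil; split; [intros l []| by []]|].
  destruct (@list_choice _ _ (list_prod (enum {set 'I_n}) (sublists Lk))
      (fun CS t => [/\ Uai t, colours t = CS.1 & forall l, In l CS.2 <-> In l Lk /\ ult t l]))
    as [L [HL HL']].
  exists L; split; [intros l Hl; destruct (HL' l Hl) as [_ [_ [Hl' _ _]]]; exact Hl'|].
  intros x Hx Hxk.
  destruct (sublists_filter Lk (fun l => ult x l)) as [S [HS HSx]].
  destruct (HL (colours x, S)) as [t [Ht [Hut Hct HSt]]].
  - apply in_prod; auto. apply memIn; rewrite mem_enum; auto.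
  - exists x; split; auto.
  - have Hsmall z : Uai z -> colours z = colours x ->
        forall y, Uai y -> ult z y -> exists l, In l Lk /\ ueq y l.
    { intros Hz Hcz y Hy Hzy. apply HLk'; auto.
      apply: (leq_trans (Uai_ult_card Hz Hy Hzy)); rewrite Hcz -ltnS; exact Hxk. }
    exists t; split; auto. apply Uai_determined; auto.
    intros y Hy; split; intro Hu;
      [destruct (Hsmall x Hx erefl y Hy Hu) as [l [Hl Hyl]]| destruct (Hsmall t Hut Hct y Hy Hu) as [l [Hl Hyl]]];
      have Hly : ueq l y by intro a; split; apply Hyl.
    + apply (ult_ueq (y := l)); auto. apply HSt, HSx; split; auto. apply (ult_ueq Hu), Hyl.
    + apply (ult_ueq (y := l)); auto. apply HSx, HSt; split; auto. apply (ult_ueq Hu), Hyl.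
Qed.

Lemma Uai_finite : exists L : list (upoint n), (forall l, In l L -> Uai l) /\
  forall x, Uai x -> exists l, In l L /\ ueq x l.
Proof.
  destruct (Uai_finite_below n.+1) as [L [HL HL']]. exists L; split; auto.
  intros x Hx; apply HL'; auto. rewrite ltnS -[X in _ <= X](card_ord n). apply: max_card.
Qed.

End Finiteness.

Section Filtration.
Variable n : nat.

Fixpoint subformulas (a : form n) : list (form n) :=
  a :: match a with And b c | Or b c | Imp b c => subformulas b ++ subformulas c | _ => nil end.

Variable Sig : list (form n).

Definition pfilter := {x : form n -> Prop | prime_filter x}.
Definition fle (x y : pfilter) := forall p, In p Sig -> proj1_sig x p -> proj1_sig y p.

Lemma fle_refl x : fle x x. Proof. by []. Qed.
Lemma fle_trans x y z : fle x y -> fle y z -> fle x z. Proof. intros Hxy Hyz p Hp H; auto. Qed.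

Definition filtration : kmodel n :=
  @KModel n pfilter fle (fun x i => In (Var i) Sig /\ proj1_sig x (Var i)) fle_refl fle_trans
    (fun x y i Hxy Hx => conj (proj1 Hx) (Hxy _ (proj1 Hx) (proj2 Hx))).

Lemma filtration_forces p : List.incl (subformulas p) Sig ->
  forall x : pfilter, forces (M := filtration) x p <-> proj1_sig x p.
Proof.
  induction p as [i| |a IHa b IHb|a IHa b IHb|a IHa b IHb]; intros Hp x; simpl;
    [| |destruct (incl_cons_inv Hp) as [_ [Ha Hb]%incl_app_inv]..].
  - split; [tauto| split; [apply Hp; left|]; auto].
  - split; [tauto| apply (pf_Bot (proj2_sig x))].
  - by rewrite (pf_AndE (proj2_sig x)) (IHa Ha) (IHb Hb).
  - by rewrite (pf_OrE (proj2_sig x)) (IHa Ha) (IHb Hb).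
  - split.
    + intro H. apply NNPP; intro Hn.
      destruct (pf_extension (proj2_sig x) Hn) as [y [Hy [Hxy [Hya Hyb]]]].
      apply Hyb, (IHb Hb (exist _ y Hy)), H; [intros q _; apply Hxy| apply (IHa Ha (exist _ y Hy)), Hya].
    + intros H y Hxy Hya. apply (IHb Hb). apply (IHa Ha) in Hya.
      exact (pf_mp (proj2_sig y) (Hxy _ (Hp _ (or_introl erefl)) H) Hya).
Qed.

Lemma filtration_covers (x : pfilter) : exists L, covers fle L x.
Proof.
  destruct (@list_choice _ _ (sublists Sig)
      (fun S (t : pfilter) => forall p, In p S <-> In p Sig /\ proj1_sig t p)) as [L [HL _]].
  exists L; intros v _.
  destruct (sublists_filter Sig (proj1_sig v)) as [S [HS HSv]].
  destruct (HL S HS (ex_intro _ v HSv)) as [t [Ht HSt]].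
  exists t; split; [|split]; auto; intros p Hp H; [apply HSt, HSv| apply HSv, HSt]; auto.
Qed.

End Filtration.

Lemma upoint_countermodel n (a b : iform n) : ~ prov (Imp (emb a) (emb b)) ->
  exists u : upoint n, proj1_sig u (emb a) /\ ~ proj1_sig u (emb b).
Proof.
  intro Hn.
  destruct (@lindenbaum n (fun p => p = emb a) (emb b)) as [y [Hy [Hay Hby]]].
  - intros [L [HL Hd]]. apply Hn, ndImpI. eapply nd_weaken; [exact Hd|].
    intros q Hq; left; symmetry; apply HL, Hq.
  - set Sig := subformulas (Imp (emb a) (emb b)).
    set y0 := exist _ y Hy : pfilter n.
    destruct (filtration_covers Sig y0) as [L HL].
    exists (theory_upoint (@theory_finite_upset n (filtration Sig) y0 L HL)); simpl.
    destruct (incl_cons_inv (incl_refl Sig)) as [_ [Ha Hb]%incl_app_inv].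
    unfold theory; rewrite (filtration_forces Ha y0) (filtration_forces Hb y0).
    split; [apply Hay|]; auto.
Qed.

Section Representation.
Variable n : nat.
Implicit Types (x y z : upoint n).

Definition iform_upset (a : iform n) x : Prop := Uai x /\ proj1_sig x (emb a).

Lemma Uai_separating_iform x y : Uai x -> Uai y -> ~ ule x y ->
  exists c : iform n, proj1_sig x (emb c) /\ ~ proj1_sig y (emb c).
Proof.
  intros Hx Hy Hxy. apply NNPP; intro Hn. apply Hxy, Uai_ule_of_iincl; auto.
  intros c Hc. apply NNPP; intro Hc'. apply Hn; exists c; auto.
Qed.

(* The conjunction of formulas separating [x] from each point of the finite
   [U(n)_{\wedge,\to}] that is not above it. *)
Lemma Uai_principal_upset x : Uai x ->
  exists phi : iform n, forall z, Uai z -> proj1_sig z (emb phi) <-> ule x z.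
Proof.
  intros Hx. destruct (@Uai_finite n) as [L [HL HL']].
  destruct (@list_choice _ _ L
      (fun l (c : iform n) => ~ ule x l /\ proj1_sig x (emb c) /\ ~ proj1_sig l (emb c)))
    as [cs [Hcs Hcs']].
  exists (bigIAnd cs). intros z Hz. rewrite upoint_bigIAnd. split.
  - intro H. apply NNPP; intro Hxz. destruct (HL' z Hz) as [l [Hl Hzl]].
    have Hxl : ~ ule x l by intro Hxl; apply Hxz; intros a Ha; apply Hzl, Hxl, Ha.
    destruct (Hcs l Hl) as [c [Hc [_ [_ Hlc]]]].
    + destruct (Uai_separating_iform Hx (HL l Hl) Hxl) as [c [? ?]]; exists c; auto.
    + apply Hlc, Hzl, H, Hc.
  - intros Hxz c Hc. destruct (Hcs' c Hc) as [l [_ [_ [Hxc _]]]]. apply Hxz, Hxc.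
Qed.

Lemma Uai_principal_downset_compl x : Uai x ->
  exists psi : iform n, forall z, Uai z -> proj1_sig z (emb psi) <-> ~ ule z x.
Proof.
  intros Hx. destruct (Uai_principal_upset Hx) as [phi Hphi].
  destruct (Uai_separated Hx) as [q [Hq Hqs]].
  exists (IImp phi (IVar q)). intros z Hz. rewrite (Uai_Imp _ _ Hz). split.
  - intros H Hzx. apply Hq, H, (Hphi x Hx); auto. apply ule_refl.
  - intros Hzx w Hw Hzw Hwphi. apply Hqs; auto. split; [apply (Hphi w Hw), Hwphi|].
    intro Hwx; apply Hzx, (ule_trans Hzw Hwx).
Qed.

Lemma iform_upset_upset a : upset_Uai (iform_upset a).
Proof. split; [intros x []; auto| intros x y [Hx Ha] Hy Hxy; split; auto]. Qed.

Lemma iform_upset_IAnd a b x :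
  iform_upset (IAnd a b) x <-> iform_upset a x /\ iform_upset b x.
Proof. rewrite /iform_upset /= (pf_AndE (upoint_pf x)); tauto. Qed.

Lemma iform_upset_IImp a b x :
  iform_upset (IImp a b) x <-> up_imp (iform_upset a) (iform_upset b) x.
Proof.
  rewrite /iform_upset /up_imp /=. split; intros [Hx H]; split; auto.
  - intros y Hy Hxy [_ Hya]; split; auto. exact (proj1 (Uai_Imp _ _ Hx) H y Hy Hxy Hya).
  - apply (Uai_Imp _ _ Hx). intros y Hy Hxy Hya. apply (H y Hy Hxy (conj Hy Hya)).
Qed.

(* A countermodel in [U(n)] can be pushed up to a separated point, whose image in
   [U(n)_{\wedge,\to}] has the same (\wedge,\to)-theory. *)
Lemma iform_upset_sub_prov a b :
  (forall x, iform_upset a x -> iform_upset b x) -> prov (Imp (emb a) (emb b)).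
Proof.
  intro H. apply NNPP; intro Hn.
  destruct (upoint_countermodel Hn) as [u [Hua Hub]].
  destruct (separated_refutation Hua Hub) as [m [_ [Hm [Hma Hmb]]]].
  set s := exist _ m Hm : spoint n.
  apply Hmb, (usep_point_iform b s), H.
  split; [apply Uai_usep_point| apply (usep_point_iform a s), Hma].
Qed.

Lemma iform_upset_ext_iff a b :
  (forall x, iform_upset a x <-> iform_upset b x) <-> ipc_equiv a b.
Proof.
  split; [intro H; split; apply iform_upset_sub_prov; intro x; apply H|].
  intros [Hab Hba] x; split; intros [Hx H]; split; auto; eapply pf_prov_imp; eauto; apply upoint_pf.
Qed.

(* An up-set [A] is the meet, over the finitely many points [l] outside [A], of the
   formulas defining the complement of the down-set of [l]. *)
Lemma iform_upset_surj (A : upoint n -> Prop) : upset_Uai A ->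
  exists a, forall x, iform_upset a x <-> A x.
Proof.
  intros [HAU HAup]. destruct (@Uai_finite n) as [L [HL HL']].
  destruct (@list_choice _ _ L
      (fun l (psi : iform n) => ~ A l /\ forall z, Uai z -> proj1_sig z (emb psi) <-> ~ ule z l))
    as [ds [Hds Hds']].
  exists (bigIAnd ds). intro x; rewrite /iform_upset upoint_bigIAnd. split.
  - intros [Hx H]. apply NNPP; intro Hn. destruct (HL' x Hx) as [l [Hl Hxl]].
    have Hxl' : ule x l by intros a Ha; apply Hxl, Ha.
    have Hnl : ~ A l by intro Hal; apply Hn, (HAup l x Hal Hx); intros a Ha; apply Hxl, Ha.
    destruct (Hds l Hl) as [psi [Hpsi [_ Hz]]].
    + destruct (Uai_principal_downset_compl (HL l Hl)) as [psi Hpsi]; exists psi; auto.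
    + exact (proj1 (Hz x Hx) (H psi Hpsi) Hxl').
  - intro Hx. have HUx := HAU x Hx. split; auto. intros psi Hpsi.
    destruct (Hds' psi Hpsi) as [l [Hl [Hnl Hz]]].
    apply (Hz x HUx). intro Hxl. apply Hnl, (HAup x l Hx (HL l Hl) Hxl).
Qed.

End Representation.

Theorem corollary3p17 (n : nat) :
  exists g : iform n -> (upoint n -> Prop), impl_semilattice_iso g.
Proof.
  exists (@iform_upset n). split.
  - exact (@iform_upset_upset n).
  - exact (@iform_upset_IAnd n).
  - exact (@iform_upset_IImp n).
  - exact (@iform_upset_ext_iff n).
  - exact (@iform_upset_surj n).
Qed.
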